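(* Let $\alpha\in[0,1]$ be irrational, $n\geq 2$, and let $\alpha_n=\frac{p_n}{q_n}$ be the $n$-th rational approximant to $\alpha$. Then $v_{\alpha_n}(k)=v_\alpha(k)$ for all $-q_n+1\le k\le q_{n+1}-2$ if $n$ is even, and for all $-q_{n+1}-1\le k\le q_n-2$ if $n$ is odd; and $\widetilde v_{\alpha_n}(k)=\widetilde v_\alpha(k)$ for all $-q_{n+1}-1\le k\le q_n-2$ if $n$ is even, and for all $-q_n+1\le k\le q_{n+1}-2$ if $n$ is odd.
   Context: For $\beta\in[0,1]$: $v_\beta(k)=\chi_{[1-\beta,1)}(k\beta\bmod 1)$ and $\widetilde v_\beta(k)=\chi_{(1-\beta,1]\cup\{0\}}(k\beta\bmod 1)$, $k\in\mathbb{Z}$. Rational approximants: for $\alpha=[a_1,a_2,\dots]$ (continued fraction), $p_{-1}=1,p_0=0,p_n=a_np_{n-1}+p_{n-2}$, $q_{-1}=0,q_0=1,q_n=a_nq_{n-1}+q_{n-2}$, $\alpha_n=p_n/q_n$. *)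

From Stdlib Require Import Reals ZArith Lra.
Open Scope R_scope.

Definition fracR (x : R) : R := x - IZR (Int_part x).

Definition v (beta : R) (k : Z) : R :=
  let t := fracR (IZR k * beta) in
  if Rle_dec (1 - beta) t then (if Rlt_dec t 1 then 1 else 0) else 0.

Definition vt (beta : R) (k : Z) : R :=
  let t := fracR (IZR k * beta) in
  if Req_EM_T t 0 then 1 else
  if Rlt_dec (1 - beta) t then (if Rle_dec t 1 then 1 else 0) else 0.

Definition irrational (x : R) : Prop :=
  ~ exists (p q : Z), q <> 0%Z /\ x = IZR p / IZR q.

Fixpoint gauss (alpha : R) (m : nat) : R :=
  match m with
  | O => alpha
  | S m' => let x := gauss alpha m' in / x - IZR (Int_part (/ x))
  end.

(* partial quotients: alpha = [a_1, a_2, ...], a_n = floor(1/x_{n-1}) for n >= 1 *)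
Definition cf_a (alpha : R) (n : nat) : Z := Int_part (/ gauss alpha (pred n)).

(* cf_pq alpha n = (p_{n-1}, p_n, q_{n-1}, q_n) *)
Fixpoint cf_pq (alpha : R) (n : nat) : Z * Z * Z * Z :=
  match n with
  | O => (1%Z, 0%Z, 0%Z, 1%Z)
  | S m =>
      let '(pm1, pm, qm1, qm) := cf_pq alpha m in
      let a := cf_a alpha (S m) in
      (pm, (a * pm + pm1)%Z, qm, (a * qm + qm1)%Z)
  end.

Definition cf_p (alpha : R) (n : nat) : Z := let '(_, p, _, _) := cf_pq alpha n in p.
Definition cf_q (alpha : R) (n : nat) : Z := let '(_, _, _, q) := cf_pq alpha n in q.

Definition approx (alpha : R) (n : nat) : R := IZR (cf_p alpha n) / IZR (cf_q alpha n).

From Stdlib Require Import Reals ZArith Lra Lia Psatz.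
Open Scope R_scope.

(* Both sequences are differences of consecutive floors:
   v_b(k) = floor((k+1)b) - floor(kb) and vt_b(k) = v_b(-k-1), so it suffices
   that floor(k alpha) = floor(k p_n / q_n) for -q_n < (-1)^n k <= q_{n+1} + 1.
   Write q_n alpha = p_n + (-1)^n E, where E is the product of the first n+1
   Gauss iterates, and k p_n = m q_n + r with 0 <= r < q_n.  Then
   q_n k alpha = m q_n + r + (-1)^n k E, so both floors equal m as soon as
   0 <= r + (-1)^n k E < q_n.  The determinant identity
   p_{n+1} q_n - p_n q_{n+1} = (-1)^n gives q_{n+1} E < 1; it also makes p_n and
   q_n coprime, so r >= 1 when 0 < |k| < q_n; and at the endpoint
   (-1)^n k = q_{n+1} + 1 one computes r <= q_n - 2. *)

Lemma v_Int_part (b : R) (k : Z) : 0 <= b <= 1 ->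
  v b k = IZR (Int_part (IZR (k + 1) * b) - Int_part (IZR k * b)).
Proof.
  intros Hb; unfold v, fracR.
  rewrite plus_IZR, Rmult_plus_distr_r, Rmult_1_l.
  destruct (base_Int_part (IZR k * b)) as [H1 H2].
  set (x := IZR k * b) in *; set (F := Int_part x) in *.
  destruct (Rle_dec (1 - b) (x - IZR F)).
  - destruct (Rlt_dec (x - IZR F) 1); [|lra].
    rewrite <- (Int_part_spec (x + b) (F + 1)) by (rewrite plus_IZR; lra).
    f_equal; ring.
  - rewrite <- (Int_part_spec (x + b) F) by lra.
    rewrite Z.sub_diag; reflexivity.
Qed.

Lemma vt_eq_v_reflect (b : R) (k : Z) : 0 < b <= 1 -> vt b k = v b (- k - 1).
Proof.
  intros Hb; rewrite v_Int_part by lra; unfold vt, fracR.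
  replace (IZR (- k - 1 + 1)) with (- IZR k) by (rewrite <- opp_IZR; f_equal; ring).
  replace (IZR (- k - 1) * b) with (- (IZR k * b) - b)
    by (rewrite minus_IZR, opp_IZR; ring).
  replace (- IZR k * b) with (- (IZR k * b)) by ring.
  destruct (base_Int_part (IZR k * b)) as [H1 H2].
  set (x := IZR k * b) in *; set (F := Int_part x) in *.
  destruct (Req_EM_T (x - IZR F) 0) as [Hint | Hfrac].
  - rewrite <- (Int_part_spec (- x) (- F)) by (rewrite opp_IZR; lra).
    rewrite <- (Int_part_spec (- x - b) (- F - 1)) by (rewrite minus_IZR, opp_IZR; lra).
    f_equal; ring.
  - rewrite <- (Int_part_spec (- x) (- F - 1)) by (rewrite minus_IZR, opp_IZR; lra).
    destruct (Rlt_dec (1 - b) (x - IZR F)).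
    + destruct (Rle_dec (x - IZR F) 1); [|lra].
      rewrite <- (Int_part_spec (- x - b) (- F - 2))
        by (rewrite minus_IZR, opp_IZR; lra).
      f_equal; ring.
    + rewrite <- (Int_part_spec (- x - b) (- F - 1))
        by (rewrite minus_IZR, opp_IZR; lra).
      rewrite Z.sub_diag; reflexivity.
Qed.

Lemma Int_part_mul_perturbed (p q k : Z) (x D : R) :
  (0 < q)%Z -> IZR q * x = IZR p + D ->
  0 <= IZR ((k * p) mod q) + IZR k * D < IZR q ->
  Int_part (IZR k * x) = ((k * p) / q)%Z.
Proof.
  intros Hq Hx Hr.
  pose proof (Z.div_mod (k * p) q ltac:(lia)) as Hdm.
  set (m := ((k * p) / q)%Z) in *; set (r := ((k * p) mod q)%Z) in *.
  apply IZR_lt in Hq.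
  assert (Hscaled : IZR q * (IZR k * x) = IZR q * IZR m + (IZR r + IZR k * D)).
  { replace (IZR q * (IZR k * x)) with (IZR k * (IZR q * x)) by ring.
    rewrite Hx, Rmult_plus_distr_l, <- mult_IZR, Hdm, plus_IZR, mult_IZR; ring. }
  symmetry; apply Int_part_spec; split; nra.
Qed.

Lemma Int_part_mul_approx (p q k : Z) (x D : R) :
  (0 < q)%Z -> IZR q * x = IZR p + D ->
  0 <= IZR ((k * p) mod q) + IZR k * D < IZR q ->
  Int_part (IZR k * x) = Int_part (IZR k * (IZR p / IZR q)).
Proof.
  intros Hq Hx Hr.
  assert (Hq0 : IZR q <> 0) by (apply not_0_IZR; lia).
  rewrite (Int_part_mul_perturbed p q k x D), (Int_part_mul_perturbed p q k _ 0); auto.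
  - field; exact Hq0.
  - pose proof (Z.mod_pos_bound (k * p) q Hq) as [H0 H1].
    apply IZR_le in H0; apply IZR_lt in H1; lra.
Qed.

Lemma mod_nonzero_of_det (p q P Q s k : Z) :
  (s = 1 \/ s = -1)%Z -> (P * q - p * Q = s)%Z -> (0 < Z.abs k < q)%Z ->
  ((k * p) mod q <> 0)%Z.
Proof.
  intros Hs Hdet Hk Hmod.
  apply Z.mod_divide in Hmod; [|lia].
  rewrite Z.mul_comm in Hmod.
  apply Z.gauss in Hmod.
  - apply Z.divide_abs_r, Z.divide_pos_le in Hmod; lia.
  - apply Z.bezout_1_gcd; exists (s * P)%Z, (- (s * Q))%Z.
    destruct Hs as [-> | ->]; lia.
Qed.

Lemma Int_part_mul_eq_convergent (p q P Q s : Z) (x E : R) :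
  (s = 1 \/ s = -1)%Z -> (1 <= p < q)%Z -> (q <= Q)%Z -> (P * q - p * Q = s)%Z ->
  IZR q * x = IZR p + IZR s * E -> 0 < E -> IZR Q * E < 1 ->
  forall k, (- q < s * k <= Q + 1)%Z ->
  Int_part (IZR k * x) = Int_part (IZR k * (IZR p / IZR q)).
Proof.
  intros Hs Hp HqQ Hdet Hx HE HQE k Hk.
  apply (Int_part_mul_approx p q k x (IZR s * E)); [lia | exact Hx |].
  pose proof (Z.mod_pos_bound (k * p) q ltac:(lia)) as Hr.
  set (r := ((k * p) mod q)%Z) in *.
  replace (IZR k * (IZR s * E)) with (IZR (s * k) * E) by (rewrite mult_IZR; ring).
  assert (HE1 : E < 1) by (assert (1 <= IZR Q) by (apply IZR_le; lia); nra).
  assert (Hrq : IZR r + 1 <= IZR q) by (rewrite <- plus_IZR; apply IZR_le; lia).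
  destruct (Z_lt_le_dec (s * k) 0) as [Hneg | Hnneg].
  - assert (Hr1 : (1 <= r)%Z).
    { enough (r <> 0)%Z by lia.
      apply (mod_nonzero_of_det p q P Q s k); auto; destruct Hs as [-> | ->]; lia. }
    apply IZR_le in Hr1.
    assert (- IZR (s * k) <= IZR Q) by (rewrite <- opp_IZR; apply IZR_le; lia).
    assert (IZR (s * k) < 0) by (apply IZR_lt; lia).
    nra.
  - destruct (Z.eq_dec (s * k) (Q + 1)) as [Hend | Hin].
    + (* at the endpoint, k p = s (P q + p) - 1 and q does not divide p *)
      assert (Hr2 : (r <= q - 2)%Z).
      { unfold r; destruct Hs as [-> | ->].
        - replace k with (Q + 1)%Z by lia.
          rewrite <- (Z.mod_unique ((Q + 1) * p) q P (p - 1)); lia.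
        - replace k with (- Q - 1)%Z by lia.
          rewrite <- (Z.mod_unique ((- Q - 1) * p) q (- P - 1) (q - 1 - p)); lia. }
      apply IZR_le in Hr2; rewrite minus_IZR in Hr2.
      rewrite Hend, plus_IZR.
      assert (0 <= IZR r) by (apply IZR_le; lia).
      assert (0 <= IZR Q) by (apply IZR_le; lia).
      split; nra.
    + assert (0 <= IZR (s * k) <= IZR Q) by (split; apply IZR_le; lia).
      assert (0 <= IZR r) by (apply IZR_le; lia).
      split; nra.
Qed.



Lemma Zpow_opp1 (n : nat) :
  ((-1) ^ Z.of_nat n = if Nat.even n then 1 else -1)%Z.
Proof.
  induction n as [|n IH]; [reflexivity|].
  rewrite Nat2Z.inj_succ, Z.pow_succ_r, IH by lia.
  rewrite Nat.even_succ, <- Nat.negb_even.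
  destruct (Nat.even n); reflexivity.
Qed.

Lemma irrational_neq_IZR (x : R) (z : Z) : irrational x -> x <> IZR z.
Proof.
  intros Hx ->; apply Hx; exists z, 1%Z; split; [lia | field].
Qed.

Lemma irrational_inv_sub (x : R) (z : Z) :
  irrational x -> irrational (/ x - IZR z).
Proof.
  intros Hx [p [q [Hq Hy]]]; apply Hx.
  assert (Hx0 : x <> 0) by exact (irrational_neq_IZR x 0 Hx).
  assert (Hq0 : IZR q <> 0) by (apply not_0_IZR; exact Hq).
  assert (Hinv : / x = IZR (z * q + p) / IZR q).
  { rewrite plus_IZR, mult_IZR.
    replace (/ x) with (IZR z + IZR p / IZR q) by lra; field; exact Hq0. }
  assert (Hn : IZR (z * q + p) <> 0).
  { intro Hn; rewrite Hn in Hinv; unfold Rdiv in Hinv; rewrite Rmult_0_l in Hinv.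
    exact (Rinv_neq_0_compat x Hx0 Hinv). }
  exists q, (z * q + p)%Z; split; [intro H0; apply Hn; rewrite H0; reflexivity|].
  rewrite <- (Rinv_inv x), Hinv; field; split; assumption.
Qed.

Lemma gauss_S (alpha : R) (m : nat) :
  gauss alpha (S m) = / gauss alpha m - IZR (cf_a alpha (S m)).
Proof. reflexivity. Qed.

Lemma gauss_irrational (alpha : R) (m : nat) :
  irrational alpha -> irrational (gauss alpha m).
Proof.
  intros Ha; induction m as [|m IH]; [exact Ha|].
  rewrite gauss_S; apply irrational_inv_sub, IH.
Qed.

Lemma gauss_bounds (alpha : R) (m : nat) :
  0 < alpha < 1 -> irrational alpha -> 0 < gauss alpha m < 1.
Proof.
  intros Ha Hi; destruct m as [|m]; [exact Ha|].
  pose proof (irrational_neq_IZR _ 0 (gauss_irrational alpha (S m) Hi)) as H0.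
  rewrite gauss_S in *; unfold cf_a in *; simpl pred in *.
  destruct (base_Int_part (/ gauss alpha m)); lra.
Qed.

Lemma cf_a_ge1 (alpha : R) (m : nat) :
  0 < alpha < 1 -> irrational alpha -> (1 <= cf_a alpha (S m))%Z.
Proof.
  intros Ha Hi; unfold cf_a; simpl pred.
  pose proof (gauss_bounds alpha m Ha Hi) as Hx.
  assert (H1 : 1 < / gauss alpha m).
  { rewrite <- Rinv_1; apply Rinv_lt_contravar; lra. }
  destruct (base_Int_part (/ gauss alpha m)).
  enough (0 < Int_part (/ gauss alpha m))%Z by lia.
  apply lt_IZR; lra.
Qed.

Lemma cf_p_SS (alpha : R) (m : nat) :
  cf_p alpha (S (S m)) = (cf_a alpha (S (S m)) * cf_p alpha (S m) + cf_p alpha m)%Z.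
Proof.
  unfold cf_p; cbn [cf_pq]; destruct (cf_pq alpha m) as [[[? ?] ?] ?]; reflexivity.
Qed.

Lemma cf_q_SS (alpha : R) (m : nat) :
  cf_q alpha (S (S m)) = (cf_a alpha (S (S m)) * cf_q alpha (S m) + cf_q alpha m)%Z.
Proof.
  unfold cf_q; cbn [cf_pq]; destruct (cf_pq alpha m) as [[[? ?] ?] ?]; reflexivity.
Qed.

Lemma cf_p_1 (alpha : R) : cf_p alpha 1 = 1%Z.
Proof. unfold cf_p; simpl; lia. Qed.

Lemma cf_q_1 (alpha : R) : cf_q alpha 1 = cf_a alpha 1.
Proof. unfold cf_q; simpl; lia. Qed.

Lemma cf_det (alpha : R) (m : nat) :
  (cf_p alpha (S m) * cf_q alpha m - cf_p alpha m * cf_q alpha (S m)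
   = (-1) ^ Z.of_nat m)%Z.
Proof.
  induction m as [|m IH].
  - rewrite cf_p_1, cf_q_1; reflexivity.
  - rewrite cf_p_SS, cf_q_SS, Nat2Z.inj_succ, Z.pow_succ_r, <- IH by lia.
    ring.
Qed.

Section PositiveRecurrence.

Variables (a u : nat -> Z).
Hypothesis a_ge1 : forall m, (1 <= a m)%Z.
Hypothesis u_rec : forall m, u (S (S m)) = (a m * u (S m) + u m)%Z.
Hypothesis u_0 : (0 <= u 0 <= u 1)%Z.

Lemma recurrence_step_le (m : nat) : (0 <= u m <= u (S m))%Z.
Proof.
  induction m as [|m IH]; [exact u_0|].
  rewrite u_rec; pose proof (a_ge1 m); nia.
Qed.

Lemma recurrence_le (i j : nat) : (i <= j)%nat -> (u i <= u j)%Z.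
Proof.
  induction 1 as [|j _ IH]; [lia|].
  pose proof (recurrence_step_le j); lia.
Qed.

End PositiveRecurrence.

Section Convergents.

Variable alpha : R.
Hypothesis alpha_unit : 0 < alpha < 1.
Hypothesis alpha_irr : irrational alpha.

Let a_ge1 (m : nat) : (1 <= cf_a alpha (S m))%Z := cf_a_ge1 alpha m alpha_unit alpha_irr.

Lemma cf_q_le_succ (m : nat) : (1 <= cf_q alpha m <= cf_q alpha (S m))%Z.
Proof.
  assert (Hq01 : (0 <= cf_q alpha 0 <= cf_q alpha 1)%Z).
  { rewrite cf_q_1; pose proof (a_ge1 0); cbn; lia. }
  pose proof (recurrence_le _ _ (fun m => a_ge1 (S m)) (cf_q_SS alpha) Hq01) as Hle.
  split; [apply (Hle 0%nat m) | apply Hle]; lia.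
Qed.

Lemma cf_p_ge1 (m : nat) : (1 <= m)%nat -> (1 <= cf_p alpha m)%Z.
Proof.
  intros Hm; rewrite <- (cf_p_1 alpha).
  apply (recurrence_le (fun m => cf_a alpha (S (S m))) (cf_p alpha));
    [intros; apply a_ge1 | apply cf_p_SS | rewrite cf_p_1; cbn; lia | exact Hm].
Qed.

Lemma cf_p_lt_q (m : nat) : (2 <= m)%nat -> (cf_p alpha m < cf_q alpha m)%Z.
Proof.
  intros Hm; destruct m as [|[|m]]; [lia | lia |].
  set (d m := (cf_q alpha (S m) - cf_p alpha (S m))%Z).
  assert (Hd_rec : forall k, d (S (S k)) = (cf_a alpha (S (S (S k))) * d (S k) + d k)%Z).
  { intros k; unfold d; rewrite cf_p_SS, cf_q_SS; ring. }
  assert (Hd01 : (0 <= d 0%nat <= d 1%nat /\ 1 <= d 1%nat)%Z).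
  { unfold d; rewrite cf_p_SS, cf_q_SS, cf_p_1, cf_q_1.
    pose proof (a_ge1 0); pose proof (a_ge1 1); cbn; nia. }
  destruct Hd01 as [Hd01 Hd1].
  pose proof (recurrence_le _ d (fun k => a_ge1 (S (S k))) Hd_rec Hd01 1 (S m)) as Hd.
  unfold d in Hd, Hd1; lia.
Qed.

Fixpoint gauss_prod (m : nat) : R :=
  match m with O => 1 | S m => gauss_prod m * gauss alpha m end.

Lemma gauss_prod_pos (m : nat) : 0 < gauss_prod m.
Proof.
  induction m as [|m IH]; cbn [gauss_prod]; [lra|].
  pose proof (gauss_bounds alpha m alpha_unit alpha_irr); nra.
Qed.

Lemma cf_error (m : nat) :
  IZR (cf_q alpha m) * alpha - IZR (cf_p alpha m) = (-1) ^ m * gauss_prod (S m).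
Proof.
  enough (H : forall m, IZR (cf_q alpha m) * alpha - IZR (cf_p alpha m)
                          = (-1) ^ m * gauss_prod (S m)
                        /\ IZR (cf_q alpha (S m)) * alpha - IZR (cf_p alpha (S m))
                          = (-1) ^ S m * gauss_prod (S (S m))) by apply H.
  intros k; induction k as [|k [IH0 IH1]].
  - rewrite cf_p_1, cf_q_1; cbn [gauss_prod pow]; rewrite (gauss_S alpha 0).
    change (gauss alpha 0) with alpha; change (cf_q alpha 0) with 1%Z.
    change (cf_p alpha 0) with 0%Z.
    split; [ring | field; lra].
  - split; [exact IH1|].
    rewrite cf_p_SS, cf_q_SS, !plus_IZR, !mult_IZR.
    pose proof (gauss_bounds alpha (S k) alpha_unit alpha_irr).
    transitivity (IZR (cf_a alpha (S (S k)))
                    * (IZR (cf_q alpha (S k)) * alpha - IZR (cf_p alpha (S k)))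
                  + (IZR (cf_q alpha k) * alpha - IZR (cf_p alpha k))); [ring|].
    rewrite IH0, IH1; cbn [gauss_prod pow]; rewrite (gauss_S alpha (S k)).
    field; lra.
Qed.

Lemma cf_q_succ_mul_error_lt (m : nat) :
  IZR (cf_q alpha (S m)) * gauss_prod (S m) < 1.
Proof.
  assert (Hdet : IZR ((-1) ^ Z.of_nat m) = (-1) ^ m) by (rewrite <- pow_IZR; reflexivity).
  rewrite <- (cf_det alpha m), minus_IZR, !mult_IZR in Hdet.
  pose proof (cf_error m) as E0; pose proof (cf_error (S m)) as E1.
  assert (Hsum : (-1) ^ m * (IZR (cf_q alpha (S m)) * gauss_prod (S m)
                             + IZR (cf_q alpha m) * gauss_prod (S (S m))) = (-1) ^ m * 1).
  { transitivity (IZR (cf_q alpha (S m)) * ((-1) ^ m * gauss_prod (S m))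
                  - IZR (cf_q alpha m) * ((-1) ^ S m * gauss_prod (S (S m))));
      [cbn [pow]; ring|].
    rewrite <- E0, <- E1, <- Hdet; ring. }
  apply Rmult_eq_reg_l in Hsum; [|apply pow_nonzero; lra].
  pose proof (cf_q_le_succ m) as [Hq _]; apply IZR_le in Hq.
  pose proof (gauss_prod_pos (S (S m))); nra.
Qed.

Lemma approx_bounds (n : nat) : (2 <= n)%nat -> 0 < approx alpha n < 1.
Proof.
  intros Hn; unfold approx.
  pose proof (cf_p_ge1 n ltac:(lia)) as Hp; pose proof (cf_p_lt_q n Hn) as Hpq.
  apply IZR_le in Hp; apply IZR_lt in Hpq.
  split; [apply Rdiv_lt_0_compat; lra |].
  apply (Rmult_lt_reg_r (IZR (cf_q alpha n))); [lra |].
  replace (IZR (cf_p alpha n) / IZR (cf_q alpha n) * IZR (cf_q alpha n))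
    with (IZR (cf_p alpha n)) by (field; lra).
  lra.
Qed.

Lemma approx_Int_part_eq (n : nat) : (2 <= n)%nat ->
  forall k, (- cf_q alpha n < (-1) ^ Z.of_nat n * k <= cf_q alpha (S n) + 1)%Z ->
  Int_part (IZR k * approx alpha n) = Int_part (IZR k * alpha).
Proof.
  intros Hn k Hk; unfold approx.
  pose proof (cf_p_ge1 n ltac:(lia)); pose proof (cf_p_lt_q n Hn).
  pose proof (cf_q_le_succ n).
  symmetry; apply (Int_part_mul_eq_convergent (cf_p alpha n) (cf_q alpha n)
    (cf_p alpha (S n)) (cf_q alpha (S n)) ((-1) ^ Z.of_nat n) alpha (gauss_prod (S n)));
    [| lia | lia | | | | | exact Hk].
  - rewrite Zpow_opp1; destruct (Nat.even n); auto.
  - apply cf_det.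
  - rewrite <- pow_IZR; pose proof (cf_error n); lra.
  - apply gauss_prod_pos.
  - apply cf_q_succ_mul_error_lt.
Qed.

End Convergents.

Theorem lemma4p7 (alpha : R) (n : nat) :
  0 <= alpha <= 1 -> irrational alpha -> (2 <= n)%nat ->
  (forall k : Z,
     (if Nat.even n
      then (- cf_q alpha n + 1 <= k <= cf_q alpha (S n) - 2)%Z
      else (- cf_q alpha (S n) - 1 <= k <= cf_q alpha n - 2)%Z) ->
     v (approx alpha n) k = v alpha k)
  /\
  (forall k : Z,
     (if Nat.even n
      then (- cf_q alpha (S n) - 1 <= k <= cf_q alpha n - 2)%Z
      else (- cf_q alpha n + 1 <= k <= cf_q alpha (S n) - 2)%Z) ->
     vt (approx alpha n) k = vt alpha k).
Proof.
  intros Hal Hirr Hn.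
  assert (Hunit : 0 < alpha < 1).
  { pose proof (irrational_neq_IZR alpha 0 Hirr).
    pose proof (irrational_neq_IZR alpha 1 Hirr); lra. }
  pose proof (approx_bounds alpha Hunit Hirr n Hn) as Hb.
  assert (Hv : forall k,
    (- cf_q alpha n < (-1) ^ Z.of_nat n * k <= cf_q alpha (S n) + 1)%Z ->
    (- cf_q alpha n < (-1) ^ Z.of_nat n * (k + 1) <= cf_q alpha (S n) + 1)%Z ->
    v (approx alpha n) k = v alpha k).
  { intros k Hk Hk1.
    rewrite !v_Int_part by lra.
    rewrite !(approx_Int_part_eq alpha Hunit Hirr n Hn) by assumption.
    reflexivity. }
  rewrite Zpow_opp1 in Hv.
  split; intros k Hk; [| rewrite !vt_eq_v_reflect by lra];
    apply Hv; destruct (Nat.even n); lia.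
Qed.
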